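(* Let $G$ be the enhanced conflict graph of any traffic pattern in a multicast switch and let $k>1$. If $G$ has a set $S$ of $k$ pairwise non-adjacent vertices which all have a common neighbor $v$, then at least $k-1$ vertices of $S$ represent subflows from the same input as $v$.
   Context: A flow is $(i,J)$ with input $i$ and nonempty fanout set $J$ of outputs; a traffic pattern is a finite set of flows; subflows are $(i,J,j)$ with $j\in J$. Enhanced conflict graph: one vertex per subflow; distinct subflows $(i,J,j),(i',J',j')$ adjacent iff $j=j'$, or $i=i'$ and $J\ne J'$. *)

From mathcomp Require Import all_boot.
Set Implicit Arguments. Unset Strict Implicit. Unset Printing Implicit Defensive.

(* A flow (i, J): input i and fanout set J of outputs. *)
Definition flow (I O : finType) := (I * {set O})%type.

(* A subflow (i, J, j) with j in J. *)
Definition subflow (I O : finType) := (I * {set O} * O)%type.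

Definition sf_in   (I O : finType) (s : subflow I O) : I := s.1.1.
Definition sf_fan  (I O : finType) (s : subflow I O) : {set O} := s.1.2.
Definition sf_out  (I O : finType) (s : subflow I O) : O := s.2.

Definition traffic_pattern (I O : finType) (P : {set flow I O}) : Prop :=
  forall f, f \in P -> f.2 != set0.

(* Vertices of the enhanced conflict graph of P: the subflows of P. *)
Definition is_subflow_of (I O : finType) (P : {set flow I O}) (s : subflow I O) : bool :=
  (s.1 \in P) && (sf_out s \in sf_fan s).

Definition ecg_adj (I O : finType) (s t : subflow I O) : bool :=
  (s != t) &&
  ((sf_out s == sf_out t) || ((sf_in s == sf_in t) && (sf_fan s != sf_fan t))).

From mathcomp Require Import all_boot.

Set Implicit Arguments.
Unset Strict Implicit.
Unset Printing Implicit Defensive.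

(* A neighbour of v on another input shares v's output. Two such vertices of an
   independent set would share an output and hence be adjacent, so at most one
   vertex of S lies on an input different from v's. *)

Lemma ecg_adj_out (I O : finType) (v s : subflow I O) :
  ecg_adj v s -> sf_in s != sf_in v -> sf_out s = sf_out v.
Proof.
case/andP=> _ /orP[/eqP -> // | /andP[/eqP vs _]].
by rewrite vs eqxx.
Qed.

Lemma ecg_adj_same_out (I O : finType) (s t : subflow I O) :
  s != t -> sf_out s = sf_out t -> ecg_adj s t.
Proof. by move=> st out_st; rewrite /ecg_adj st out_st eqxx. Qed.

Lemma card_other_input_le1 (I O : finType) (S : {set subflow I O})
    (v : subflow I O) :
  (forall s t, s \in S -> t \in S -> ~~ ecg_adj s t) ->
  (forall s, s \in S -> ecg_adj v s) ->
  #|[set s in S | sf_in s != sf_in v]| <= 1.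
Proof.
move=> indepS adjS; apply/card_le1_eqP => s t.
rewrite !inE => /andP[sS sv] /andP[tS tv].
apply/eqP; apply: contraNT (indepS s t sS tS); rewrite eq_sym => st.
apply: ecg_adj_same_out => //.
by rewrite (ecg_adj_out (adjS _ sS) sv) (ecg_adj_out (adjS _ tS) tv).
Qed.

Lemma card_sep_split (T : finType) (p : pred T) (S : {set T}) :
  #|S| = #|[set x in S | p x]| + #|[set x in S | ~~ p x]|.
Proof.
rewrite -(cardsID [set x | p x] S); congr (_ + _); apply: eq_card => x.
  by rewrite !inE.
by rewrite !inE andbC.
Qed.

Theorem lemma3 (I O : finType) (P : {set flow I O}) (k : nat)
  (S : {set subflow I O}) (v : subflow I O) :
  traffic_pattern P ->
  1 < k ->
  (forall s, s \in S -> is_subflow_of P s) ->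
  is_subflow_of P v ->
  #|S| = k ->
  (forall s t, s \in S -> t \in S -> ~~ ecg_adj s t) ->
  (forall s, s \in S -> ecg_adj v s) ->
  k.-1 <= #|[set s in S | sf_in s == sf_in v]|.
Proof.
move=> _ _ _ _ <- indepS adjS.
rewrite (card_sep_split (fun s => sf_in s == sf_in v) S).
by rewrite -subn1 leq_subLR [1 + _]addnC leq_add2l card_other_input_le1.
Qed.
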